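(* Let $X=\{X_t\}_{t\in\mathbb T^d}$ be a measurable stationary random field which is positively dependent (associated). Then $X$ is ergodic if and only if it is weakly mixing.
   Context: $\mathbb T\in\{\mathbb Z,\mathbb R\}$, $\lambda$ counting/Lebesgue measure, $B(T)=(-T,T]^d\cap\mathbb T^d$, $C(T)=(2T)^d$. Associated: for all $t_1,\dots,t_n$ and all coordinatewise non-decreasing $g_1,g_2$ for which the covariance is defined, $\mathrm{Cov}(g_1(X_{t_1},\dots,X_{t_n}),g_2(X_{t_1},\dots,X_{t_n}))\ge0$. With $X_t=X_0\circ\theta_t$, $\theta$ a measure-preserving $\mathbb T^d$-action on $(\Omega,\mathcal F,\mathbb P)$, $\sigma_X=\sigma(X_t)$: ergodic means $\frac1{C(T)}\int_{B(T)}\mathbb P(A\cap\theta_t(B))\lambda(dt)\to\mathbb P(A)\mathbb P(B)$ for all $A,B\in\sigma_X$; weakly mixing means $\frac1{C(T)}\int_{B(T)}|\mathbb P(A\cap\theta_t(B))-\mathbb P(A)\mathbb P(B)|\lambda(dt)\to0$ for all $A,B\in\sigma_X$ (equivalently, convergence $\mathbb P(A\cap\theta_{t_n}(B))\to\mathbb P(A)\mathbb P(B)$ along all sequences in some density-one set tending to infinity). *)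

From HB Require Import structures.
From mathcomp Require Import all_boot all_order all_algebra.
From mathcomp Require Import all_classical all_reals all_analysis.
Set Implicit Arguments. Unset Strict Implicit. Unset Printing Implicit Defensive.
Import Order.TTheory GRing.Theory Num.Theory.
Import numFieldNormedType.Exports.
Local Open Scope classical_set_scope.
Local Open Scope ring_scope.

Definition tadd (G : zmodType) (n : nat) (s t : n.-tuple G) : n.-tuple G :=
  [tuple tnth s i + tnth t i | i < n].
Definition tzero (G : zmodType) (n : nat) : n.-tuple G := [tuple 0 | _ < n].

Definition mp_action (G : zmodType) (n : nat) (R : realType)
  (dO : measure_display) (Omega : measurableType dO) (P : probability Omega R)
  (theta : n.-tuple G -> Omega -> Omega) : Prop :=
  [/\ theta (tzero G n) = id,
      (forall s t, theta (tadd s t) = theta s \o theta t),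
      (forall t, measurable_fun setT (theta t)) &
      (forall t (A : set Omega), measurable A -> P (theta t @^-1` A) = P A)].

Definition field (G : zmodType) (n : nat) (R : realType) (Omega : Type)
  (theta : n.-tuple G -> Omega -> Omega) (X0 : Omega -> R) (t : n.-tuple G)
  : Omega -> R := X0 \o theta t.

Definition sigmaX (G : zmodType) (n : nat) (R : realType) (Omega : Type)
  (theta : n.-tuple G -> Omega -> Omega) (X0 : Omega -> R) : set (set Omega) :=
  <<s [set E | exists t (C : set R), measurable C /\
                 E = field theta X0 t @^-1` C] >>.

Definition coord_nondecr (R : realType) (m : nat) (g : m.-tuple R -> R) : Prop :=
  forall x y : m.-tuple R, (forall i, tnth x i <= tnth y i) -> g x <= g y.

(* association (positive dependence); "the covariance is defined" is read as
   g1(Y), g2(Y) and g1(Y) g2(Y) integrable (the hypotheses of covarianceE). *)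
Definition associated (G : zmodType) (n : nat) (R : realType)
  (dO : measure_display) (Omega : measurableType dO) (P : probability Omega R)
  (theta : n.-tuple G -> Omega -> Omega) (X0 : Omega -> R) : Prop :=
  forall (m : nat) (ts : m.-tuple (n.-tuple G)) (g1 g2 : m.-tuple R -> R),
    coord_nondecr g1 -> coord_nondecr g2 ->
    let Y := fun w => [tuple field theta X0 (tnth ts i) w | i < m] in
    (g1 \o Y) \in Lfun P 1 -> (g2 \o Y) \in Lfun P 1 ->
    ((g1 \o Y) * (g2 \o Y))%R \in Lfun P 1 ->
    (0 <= covariance P (g1 \o Y) (g2 \o Y))%E.

(* integral w.r.t. counting measure over B(T) = (-T,T]^n \cap Z^n, T : nat *)
Fixpoint box_sum (R : realType) (T : nat) (n : nat) :
    (n.-tuple int -> \bar R) -> \bar R :=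
  match n return (n.-tuple int -> \bar R) -> \bar R with
  | 0 => fun f => f [tuple]
  | n'.+1 => fun f =>
      (\sum_(k < 2 * T) box_sum T (fun s : n'.-tuple int =>
          f [tuple of ((k%:Z - T%:Z + 1)%R :: s)]))%E
  end.

(* integral w.r.t. Lebesgue measure over B(T) = (-T,T]^n, as an iterated
   integral (equal to the n-dimensional Lebesgue integral for nonnegative
   jointly measurable integrands, by Tonelli) *)
Fixpoint box_int (R : realType) (T : R) (n : nat) :
    (n.-tuple R -> \bar R) -> \bar R :=
  match n return (n.-tuple R -> \bar R) -> \bar R with
  | 0 => fun f => f [tuple]
  | n'.+1 => fun f =>
      (\int[@lebesgue_measure R]_(x in `](- T)%R, T]%classic)
         box_int T (fun s : n'.-tuple R => f [tuple of x :: s]))%E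
  end.

Definition ergodicZ (n : nat) (R : realType)
  (dO : measure_display) (Omega : measurableType dO) (P : probability Omega R)
  (theta : n.-tuple int -> Omega -> Omega) (X0 : Omega -> R) : Prop :=
  forall A B, sigmaX theta X0 A -> sigmaX theta X0 B ->
    (fun T : nat => ((((2 * T) ^ n)%:R : R)^-1)%:E *
        box_sum T (fun t => P (A `&` (theta t @` B))))%E
      @ \oo --> (P A * P B)%E.

Definition weakly_mixingZ (n : nat) (R : realType)
  (dO : measure_display) (Omega : measurableType dO) (P : probability Omega R)
  (theta : n.-tuple int -> Omega -> Omega) (X0 : Omega -> R) : Prop :=
  forall A B, sigmaX theta X0 A -> sigmaX theta X0 B ->
    (fun T : nat => ((((2 * T) ^ n)%:R : R)^-1)%:E *
        box_sum T (fun t => `| P (A `&` (theta t @` B)) - P A * P B |))%E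
      @ \oo --> 0%E.

Definition ergodicR (n : nat) (R : realType)
  (dO : measure_display) (Omega : measurableType dO) (P : probability Omega R)
  (theta : n.-tuple R -> Omega -> Omega) (X0 : Omega -> R) : Prop :=
  forall A B, sigmaX theta X0 A -> sigmaX theta X0 B ->
    ((((2 * T) ^+ n)^-1)%:E *
        box_int T (fun t => P (A `&` (theta t @` B))))%E
      @[T --> +oo] --> (P A * P B)%E.

Definition weakly_mixingR (n : nat) (R : realType)
  (dO : measure_display) (Omega : measurableType dO) (P : probability Omega R)
  (theta : n.-tuple R -> Omega -> Omega) (X0 : Omega -> R) : Prop :=
  forall A B, sigmaX theta X0 A -> sigmaX theta X0 B ->
    ((((2 * T) ^+ n)^-1)%:E *
        box_int T (fun t => `| P (A `&` (theta t @` B)) - P A * P B |))%E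
      @[T --> +oo] --> 0%E.

From HB Require Import structures.
From mathcomp Require Import all_boot all_order all_algebra.
From mathcomp Require Import all_classical all_reals all_analysis.
From mathcomp Require Import ring lra.
From mathcomp Require Import measurable_realfun.
Import Order.TTheory GRing.Theory Num.Theory.
Import numFieldNormedType.Exports.
Local Open Scope classical_set_scope.
Local Open Scope ring_scope.
Set Implicit Arguments. Unset Strict Implicit. Unset Printing Implicit Defensive.

(* For orthant events A = {X_s1 > c1, ..., X_sk > ck} and B, association gives
   P(A /\ theta_t B) >= P(A) P(B), since indicators of orthants are nondecreasing
   functions of finitely many X_s. On such pairs the deviation
   |P(A /\ theta_t B) - P(A) P(B)| is the signed difference, so its box average tends
   to 0 exactly when the ergodic average tends to P(A) P(B). Orthants form a pi-system
   generating sigma_X, and for a fixed event the events whose averaged deviation vanishes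
   form a lambda-system, so weak mixing spreads from orthants to sigma_X, first in A and
   then in B. The converse holds for every stationary field, as the deviation dominates
   the difference between the ergodic average and P(A) P(B). *)

Lemma cvge_nearP {R : realType} {J : Type} (F : set_system J) {PF : ProperFilter F}
    (u : J -> \bar R) (l : R) :
  u j @[j --> F] --> l%:E <->
  forall e : R, 0 < e -> \forall j \near F, ((l - e)%:E <= u j <= (l + e)%:E)%E.
Proof.
split.
- move=> /fine_cvgP[finu /cvgrPdist_le cu] e e0; near=> j.
  have fj : u j \is a fin_num by near: j.
  have : `|l - fine (u j)| <= e by near: j; exact: cu.
  by rewrite -(fineK fj) !lee_fin ler_norml => /andP[? ?]; apply/andP; split; lra.
- move=> H; apply/fine_cvgP; split.
  + apply: filterS (H 1 ltr01) => j.
    by case: (u j) => [r||] //=; rewrite ?leye_eq ?leeNy_eq ?andbF.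
  + apply/cvgrPdist_le => e e0; apply: filterS (H e e0) => j /=.
    case: (u j) => [r||] //=; rewrite ?leye_eq ?leeNy_eq ?andbF // !lee_fin.
    by move=> /andP[? ?]; rewrite ler_norml; apply/andP; split; lra.
Unshelve. all: end_near.
Qed.

(* [Av j] averages over the j-th window of the filter [F] (e.g. the boxes B(T) as
   T grows); it is additive and monotone on the class [M] of admissible integrands. *)
Definition mean_operator {R : realType} {I J : Type} (F : set_system J)
    (Av : J -> (I -> \bar R) -> \bar R) (M : (I -> \bar R) -> Prop) : Prop :=
  [/\ forall r : R, 0 <= r -> M (cst r%:E),
      forall f g, M f -> M g -> M (fun t => f t + g t)%E,
      forall r : R, 0 <= r -> \forall j \near F, Av j (cst r%:E) = r%:E,
      forall j f g, M f -> M g -> (forall t, 0 <= f t)%E -> (forall t, 0 <= g t)%E ->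
        Av j (fun t => f t + g t)%E = (Av j f + Av j g)%E &
      \forall j \near F, forall f g, M f -> M g -> (forall t, 0 <= f t)%E ->
        (forall t, f t <= g t)%E -> (Av j f <= Av j g)%E].

Section MeanOperator.
Context {R : realType} {I J : Type} (F : set_system J) {PF : ProperFilter F}
  (Av : J -> (I -> \bar R) -> \bar R) (M : (I -> \bar R) -> Prop).
Hypothesis hAv : mean_operator F Av M.

Let M_cst r : 0 <= r -> M (cst r%:E). Proof. by case: hAv => h _ _ _ _; exact: h. Qed.
Let M_add f g : M f -> M g -> M (fun t => f t + g t)%E.
Proof. by case: hAv => _ h _ _ _; exact: h. Qed.
Let Av_cst r : 0 <= r -> \forall j \near F, Av j (cst r%:E) = r%:E.
Proof. by case: hAv => _ _ h _ _; exact: h. Qed.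
Let Av_add j f g : M f -> M g -> (forall t, 0 <= f t)%E -> (forall t, 0 <= g t)%E ->
  Av j (fun t => f t + g t)%E = (Av j f + Av j g)%E.
Proof. by case: hAv => _ _ _ h _; exact: h. Qed.
Let Av_le : \forall j \near F, forall f g, M f -> M g -> (forall t, 0 <= f t)%E ->
  (forall t, f t <= g t)%E -> (Av j f <= Av j g)%E.
Proof. by case: hAv. Qed.

Let negligible (f : I -> \bar R) :=
  [/\ M f, forall t, (0 <= f t)%E & Av j f @[j --> F] --> 0%E].

Lemma negligible_cst0 : negligible (cst 0%E).
Proof.
split=> //; first exact: M_cst.
by apply: cvg_near_cst; exact: Av_cst.
Qed.

Lemma negligible_add f g : negligible f -> negligible g ->
  negligible (fun t => f t + g t)%E.
Proof.
move=> [Mf f0 cf] [Mg g0 cg]; split; [exact: M_add|by move=> t; apply: adde_ge0|].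
rewrite -[0%E]adde0; under eq_fun do rewrite Av_add //.
exact: cvgeD.
Qed.

Lemma negligible_approx f : M f -> (forall t, 0 <= f t)%E ->
  (forall e : R, 0 < e -> exists2 g, negligible g & forall t, (f t <= g t + e%:E)%E) ->
  negligible f.
Proof.
move=> Mf f0 approx; split=> //; apply/cvge_nearP => e e0.
have e2 : 0 < e / 2 by rewrite divr_gt0.
have [g [Mg g0 cg] fg] := approx _ e2.
have Avg := proj1 (cvge_nearP _ _) cg _ e2.
near=> j.
have le : forall f g, M f -> M g -> (forall t, 0 <= f t)%E ->
  (forall t, f t <= g t)%E -> (Av j f <= Av j g)%E by near: j; exact: Av_le.
have /andP[_ Avg_le] : ((0 - e / 2)%:E <= Av j g <= (0 + e / 2)%:E)%E.
  by near: j; exact: Avg.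
have Av_e2 : Av j (cst (e / 2)%:E) = (e / 2)%:E by near: j; exact: Av_cst (ltW e2).
have Av_0 : Av j (cst 0%E) = 0%E by near: j; exact: Av_cst (lexx 0).
have Avf_ge0 : (0 <= Av j f)%E by rewrite -Av_0; apply: le => //; exact: M_cst (lexx 0).
have : (Av j f <= Av j g + (e / 2)%:E)%E.
  rewrite -Av_e2 -(Av_add _ Mg (M_cst (ltW e2))) //; last first.
    by move=> t; rewrite lee_fin ltW.
  by apply: le => //; apply: M_add => //; exact: M_cst (ltW e2).
move: Avf_ge0 Avg_le; case: (Av j f) => [a||]; case: (Av j g) => [b||] //=;
  rewrite ?lee_fin ?leey ?leye_eq //= => ? ? ?; apply/andP; split; lra.
Unshelve. all: end_near.
Qed.

Lemma negligible_le f g : M f -> (forall t, 0 <= f t)%E -> negligible g ->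
  (forall t, f t <= g t)%E -> negligible f.
Proof.
move=> Mf f0 ng fg; apply: negligible_approx => // e e0; exists g => // t.
by apply: le_trans (fg t) _; rewrite leeDl // lee_fin ltW.
Qed.

Lemma negligible_of_Av_cvg f (c : R) : M f -> (forall t, 0 <= f t)%E -> 0 <= c ->
  Av j (fun t => f t + c%:E)%E @[j --> F] --> c%:E -> negligible f.
Proof.
move=> Mf f0 c0 cv; split=> //.
have c_ge0 t : (0 <= cst c%:E t)%E by rewrite lee_fin.
have shift : \forall j \near F, (Av j (fun t => f t + c%:E) - c%:E)%E = Av j f.
  near=> j; rewrite (Av_add _ Mf (M_cst c0)) //.
  have -> : Av j (cst c%:E) = c%:E by near: j; exact: Av_cst.
  by rewrite addeK.
apply: cvg_trans (near_eq_cvg shift) _.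
by rewrite -(subee (x := c%:E)) //; apply: cvgeB => //; exact: cvg_cst.
Unshelve. all: end_near.
Qed.

Lemma Av_cvg_of_negligible f h (c : R) : M f -> (forall t, 0 <= f t)%E -> 0 <= c ->
  negligible h -> (forall t, f t <= h t + c%:E)%E -> (forall t, c%:E <= f t + h t)%E ->
  Av j f @[j --> F] --> c%:E.
Proof.
move=> Mf f0 c0 [Mh h0 ch] fle fge; apply/cvge_nearP => e e0.
have Avh := proj1 (cvge_nearP _ _) ch _ e0.
near=> j.
have le : forall f g, M f -> M g -> (forall t, 0 <= f t)%E ->
  (forall t, f t <= g t)%E -> (Av j f <= Av j g)%E by near: j; exact: Av_le.
have Av_c : Av j (cst c%:E) = c%:E by near: j; exact: Av_cst.
have /andP[Avh_ge Avh_le] : ((0 - e)%:E <= Av j h <= (0 + e)%:E)%E.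
  by near: j; exact: Avh.
have c_ge0 t : (0 <= cst c%:E t)%E by rewrite lee_fin.
have : (Av j f <= Av j h + c%:E)%E.
  rewrite -Av_c -(Av_add _ Mh (M_cst c0)) //.
  by apply: le => //; exact: M_add (M_cst c0).
have : (c%:E <= Av j f + Av j h)%E.
  rewrite -Av_c -(Av_add _ Mf Mh) //.
  by apply: le => //; [exact: M_cst|exact: M_add].
move: Avh_ge Avh_le; case: (Av j f) => [a||]; case: (Av j h) => [b||] //=;
  rewrite ?lee_fin ?leey ?leye_eq ?leeNy_eq //= => *; apply/andP; split; lra.
Unshelve. all: end_near.
Qed.


Section PositiveCorrelation.
Context {dO : measure_display} {Omega : measurableType dO} (P : probability Omega R)
  (th : I -> Omega -> Omega) (G : set (set Omega)).
Local Notation S := <<s G >>.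
Hypothesis G_setI : setI_closed G.
Hypothesis G_meas : G `<=` measurable.
Hypothesis th_inj : forall t, injective (th t).
Hypothesis th_surj : forall t, th t @` setT = setT.
Hypothesis th_measurable : forall t B, measurable B -> measurable (th t @` B).
Hypothesis th_P : forall t B, measurable B -> P (th t @` B) = P B.
Hypothesis G_pos_corr : forall t A B, G A -> G B ->
  (P A * P B <= P (A `&` th t @` B))%E.
Hypothesis M_corr : forall A B, S A -> S B -> M (fun t => P (A `&` th t @` B)).
Hypothesis M_dev : forall A B, S A -> S B ->
  M (fun t => `|P (A `&` th t @` B) - P A * P B|%E).

Let ST : S setT := @measurableT _ (g_sigma_algebraType G).
Let SD A B : S A -> S B -> S (A `\` B) := @measurableD _ (g_sigma_algebraType G) A B.
Let S_bigcup (A : (set Omega)^nat) : (forall n, S (A n)) -> S (\bigcup_n A n) :=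
  @bigcupT_measurable _ (g_sigma_algebraType G) A.
Let S_meas : S `<=` measurable.
Proof. by apply: smallest_sub => //; exact: sigma_algebra_measurable. Qed.

Let mu (X : set Omega) : R := fine (P X).

Let PE X : measurable X -> P X = (mu X)%:E.
Proof. by move=> mX; rewrite /mu fineK // fin_num_measure. Qed.

Let mu_ge0 X : 0 <= mu X.
Proof. by rewrite /mu fine_ge0. Qed.

Let mu_le X Y : measurable X -> measurable Y -> X `<=` Y -> mu X <= mu Y.
Proof. by move=> mX mY XY; rewrite -lee_fin -!PE //; apply: le_measure; rewrite ?inE. Qed.

Let mu_le1 X : measurable X -> mu X <= 1.
Proof. by move=> mX; rewrite -lee_fin -PE // probability_le1. Qed.

Let muD X Y : measurable X -> measurable Y -> Y `<=` X -> mu (X `\` Y) = mu X - mu Y.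
Proof.
move=> mX mY YX; rewrite /mu measureD ?(setIidr YX) ?fineB ?fin_num_measure //.
by rewrite (le_lt_trans (probability_le1 P mX)) ?ltry.
Qed.

Let mu_setT : mu setT = 1.
Proof. by rewrite /mu probability_setT. Qed.

Let mu_image t X : measurable X -> mu (th t @` X) = mu X.
Proof. by move=> mX; rewrite /mu th_P. Qed.

Let content (phi : set Omega -> R) :=
  (forall X Y, S X -> S Y -> Y `<=` X -> phi (X `\` Y) = phi X - phi Y) /\
  (forall X, S X -> 0 <= phi X <= mu X).

Let content_sub phi X Y : content phi -> S X -> S Y -> Y `<=` X ->
  0 <= phi X - phi Y <= mu X - mu Y.
Proof.
move=> [add dom] SX SY YX; rewrite -add // -muD //; try exact: S_meas.
exact: dom (SD SX SY).
Qed.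

Let content_scale c : 0 <= c <= 1 -> content (fun X => c * mu X).
Proof.
move=> /andP[c0 c1]; split=> [X Y SX SY YX|X SX].
  by rewrite muD ?mulrBr //; exact: S_meas.
by rewrite mulr_ge0 //= ler_piMl.
Qed.

Let content_setIr C : measurable C -> content (fun X => mu (X `&` C)).
Proof.
move=> mC; split=> [X Y SX SY YX|X SX].
  have -> : (X `\` Y) `&` C = (X `&` C) `\` (Y `&` C).
    by apply/seteqP; split=> z /=; rewrite /setD /setI /=; tauto.
  by rewrite muD //; [exact: measurableI (S_meas SX) mC|exact: measurableI (S_meas SY) mC|
    move=> z [Yz Cz]; split=> //; exact: YX].
by rewrite mu_ge0 /=; apply: mu_le; [exact: measurableI (S_meas SX) mC|exact: S_meas|
  exact: subIsetl].
Qed.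

Let image_setD t X Y : th t @` (X `\` Y) = th t @` X `\` th t @` Y.
Proof.
apply/seteqP; split=> z.
- move=> [x [Xx nYx] <-]; split; first by exists x.
  by move=> [y Yy /th_inj yx]; apply: nYx; rewrite -yx.
- by move=> [[x Xx <-] nY]; exists x => //; split=> // Yx; apply: nY; exists x.
Qed.

Let content_setI_image t A : S A -> content (fun X => mu (A `&` th t @` X)).
Proof.
move=> SA; have mA := S_meas SA.
have mI X : S X -> measurable (A `&` th t @` X).
  by move=> SX; apply: measurableI mA (th_measurable t (S_meas SX)).
split=> [X Y SX SY YX|X SX].
  rewrite image_setD setIDA.
  have -> : A `&` th t @` X `\` th t @` Y = (A `&` th t @` X) `\` (A `&` th t @` Y).
    by apply/seteqP; split=> z /=; rewrite /setD /setI /=; tauto.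
  rewrite muD //; try exact: mI.
  move=> z [Az [y Yy yz]]; split=> //.
  by rewrite -yz; apply: imageP; exact: YX.
rewrite mu_ge0 /= -(mu_image t (S_meas SX)).
by apply: mu_le; [exact: mI|exact: th_measurable (S_meas SX)|exact: subIsetr].
Qed.

Let mu_bigcup_approx (Fs : (set Omega)^nat) : (forall n, S (Fs n)) -> nondecreasing_seq Fs ->
  forall e, 0 < e -> exists N, 2 * (mu (\bigcup_n Fs n) - mu (Fs N)) <= e.
Proof.
move=> SF ndF e e0; have SU := S_bigcup SF.
have : (P \o Fs) n @[n --> \oo] --> (mu (\bigcup_n Fs n))%:E.
  rewrite -PE; last exact: S_meas.
  by apply: nondecreasing_cvg_mu => //; [move=> n|]; exact: S_meas.
move=> /cvge_nearP/(_ (e / 2)); rewrite divr_gt0 // => /(_ isT) [N _ /(_ N (leqnn N))].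
rewrite /= PE ?lee_fin; last exact: S_meas.
by move=> /andP[? _]; exists N; lra.
Qed.

Let deviation_le_add (a b a' b' : R) : `|(a - b) - (a' - b')| <= `|a - a'| + `|b - b'|.
Proof.
have -> : (a - b) - (a' - b') = (a - a') - (b - b') by ring.
exact: ler_normB.
Qed.

Let deviation_le_approx (a b a' b' d : R) : 0 <= a - a' <= d -> 0 <= b - b' <= d ->
  `|a - b| <= `|a' - b'| + 2 * d.
Proof.
move=> /andP[? ?] /andP[? ?].
have := ler_norm (a' - b'); have := ler_norm (b' - a'); rewrite distrC => ? ?.
by rewrite ler_norml; apply/andP; split; lra.
Qed.

(* Dynkin's pi-lambda argument: the deviation is subadditive under proper differences
   and continuous along increasing unions. *)
Lemma negligible_deviation_ext (psi : set Omega -> I -> R) (kappa : set Omega -> R) :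
  (forall t, psi setT t = kappa setT) ->
  (forall t, content (psi^~ t)) -> content kappa ->
  (forall X, S X -> M (fun t => (`|psi X t - kappa X|)%:E)) ->
  (forall X, G X -> negligible (fun t => (`|psi X t - kappa X|)%:E)) ->
  forall X, S X -> negligible (fun t => (`|psi X t - kappa X|)%:E).
Proof.
move=> top cpsi ckappa Mw Gw.
pose w X t := (`|psi X t - kappa X|)%:E.
have w_ge0 X t : (0 <= w X t)%E by rewrite lee_fin.
suff : S `<=` [set X | S X /\ negligible (w X)] by move=> + X SX => /(_ X SX)[].
apply: lambda_system_subset => //; last first.
  by move=> X GX; split; [exact: sub_sigma_algebra|exact: Gw].
split=> //.
- split; first exact: ST.
  have -> : w setT = cst 0%E.
    by apply/funext => t; rewrite /w top subrr normr0.
  exact: negligible_cst0.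
- move=> X Y YX [SX nX] [SY nY]; split; first exact: SD.
  apply: negligible_le (negligible_add nX nY) _ => //; first exact: Mw (SD SX SY).
  move=> t; have := deviation_le_add (psi X t) (kappa X) (psi Y t) (kappa Y).
  by rewrite /w -EFinD lee_fin (cpsi t).1 // ckappa.1.
- move=> Fs ndF HF; have SF n := (HF n).1; have SU := S_bigcup SF.
  split=> //; apply: negligible_approx => //; first exact: Mw.
  move=> e e0; have [N approxN] := mu_bigcup_approx SF ndF e0.
  exists (w (Fs N)) => [|t]; first exact: (HF N).2.
  have FU : Fs N `<=` \bigcup_n Fs n by exact: bigcup_sup.
  rewrite /w -EFinD lee_fin; apply: le_trans (deviation_le_approx
    (content_sub (cpsi t) SU (SF N) FU) (content_sub ckappa SU (SF N) FU)) _.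
  by rewrite lerD2l.
Qed.

Let corr A B t : R := mu (A `&` th t @` B).
Let dev A B t : \bar R := (`|corr A B t - mu A * mu B|)%:E.

Let corrE A B t : S A -> S B -> P (A `&` th t @` B) = (corr A B t)%:E.
Proof.
move=> SA SB; rewrite PE //.
exact: measurableI (S_meas SA) (th_measurable t (S_meas SB)).
Qed.

Let corrF A B : S A -> S B -> (fun t => P (A `&` th t @` B)) = fun t => (corr A B t)%:E.
Proof. by move=> SA SB; apply/funext => t; exact: corrE. Qed.

Let productE A B : S A -> S B -> (P A * P B)%E = (mu A * mu B)%:E.
Proof. by move=> SA SB; rewrite !PE //; exact: S_meas. Qed.

Let devE A B : S A -> S B ->
  (fun t => `|P (A `&` th t @` B) - P A * P B|%E) = dev A B.
Proof.
move=> SA SB; apply/funext => t.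
by rewrite corrE // productE.
Qed.

Let M_dev_mu A B : S A -> S B -> M (dev A B).
Proof. by move=> SA SB; rewrite -devE //; exact: M_dev. Qed.

Let mu_ge0_le1 A : S A -> 0 <= mu A <= 1.
Proof. by move=> SA; rewrite mu_ge0 mu_le1 //; exact: S_meas. Qed.

(* Positive correlation makes the deviation the signed difference [corr - mu A * mu B],
   whose average is the ergodic average shifted by a constant. *)
Lemma negligible_dev_of_ergodic A B : G A -> G B ->
  Av j (fun t => (corr A B t)%:E) @[j --> F] --> (mu A * mu B)%:E ->
  negligible (dev A B).
Proof.
move=> GA GB; have SA : S A by exact: sub_sigma_algebra.
have SB : S B by exact: sub_sigma_algebra.
have -> : (fun t => (corr A B t)%:E) = fun t => (dev A B t + (mu A * mu B)%:E)%E.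
  apply/funext => t; rewrite -EFinD ger0_norm ?subrK // subr_ge0 -lee_fin.
  by rewrite -productE // -corrE // G_pos_corr.
apply: negligible_of_Av_cvg => //; [exact: M_dev_mu|by move=> t; rewrite lee_fin|].
by rewrite mulr_ge0.
Qed.

Lemma ergodic_of_negligible_dev A B : S A -> S B -> negligible (dev A B) ->
  Av j (fun t => (corr A B t)%:E) @[j --> F] --> (mu A * mu B)%:E.
Proof.
move=> SA SB ndev; apply: (@Av_cvg_of_negligible _ (dev A B) _ _ _ _ ndev).
- by rewrite -(corrF SA SB); exact: M_corr.
- by move=> t; rewrite lee_fin mu_ge0.
- by rewrite mulr_ge0.
- move=> t; rewrite -EFinD lee_fin -lerBlDr; exact: ler_norm.
- move=> t; rewrite -EFinD lee_fin -lerBlDl -normrN opprB; exact: ler_norm.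
Qed.

Theorem ergodic_iff_weak_mixing_pos_corr :
  (forall A B, S A -> S B ->
    Av j (fun t => P (A `&` th t @` B)) @[j --> F] --> (P A * P B)%E) <->
  (forall A B, S A -> S B ->
    Av j (fun t => `|P (A `&` th t @` B) - P A * P B|%E) @[j --> F] --> 0%E).
Proof.
split=> [erg A B SA SB|wm A B SA SB]; last first.
  rewrite corrF // productE //; apply: ergodic_of_negligible_dev => //.
  by split; [exact: M_dev_mu|move=> t; rewrite lee_fin|rewrite -devE //; exact: wm].
rewrite devE //; suff [] : negligible (dev A B) by [].
move: B SB; apply: (@negligible_deviation_ext (fun X t => corr A X t) (fun X => mu A * mu X)).
- by move=> t; rewrite /corr th_surj setIT mu_setT mulr1.
- by move=> t; exact: content_setI_image.
- exact/content_scale/mu_ge0_le1.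
- by move=> X SX; exact: M_dev_mu.
move=> B GB; have SB : S B by exact: sub_sigma_algebra.
move: A SA.
apply: (@negligible_deviation_ext (fun X t => corr X B t) (fun X => mu X * mu B)).
- by move=> t; rewrite /corr setTI mu_image ?mu_setT ?mul1r //; exact: S_meas.
- by move=> t; apply: content_setIr; exact: th_measurable (S_meas SB).
- have -> : (fun X => mu X * mu B) = fun X => mu B * mu X by apply/funext => X; rewrite mulrC.
  exact/content_scale/mu_ge0_le1.
- by move=> X SX; exact: M_dev_mu.
move=> A GA; have SA : S A by exact: sub_sigma_algebra.
by apply: negligible_dev_of_ergodic => //; rewrite -corrF // -productE //; exact: erg.
Qed.

End PositiveCorrelation.

End MeanOperator.

Definition tneg (G : zmodType) (n : nat) (t : n.-tuple G) : n.-tuple G :=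
  [tuple - tnth t i | i < n].

Lemma taddN (G : zmodType) n (t : n.-tuple G) : tadd t (tneg t) = tzero G n.
Proof. by apply: eq_from_tnth => i; rewrite !tnth_map !tnth_ord_tuple subrr. Qed.

Lemma taddNt (G : zmodType) n (t : n.-tuple G) : tadd (tneg t) t = tzero G n.
Proof. by apply: eq_from_tnth => i; rewrite !tnth_map !tnth_ord_tuple addNr. Qed.

Section StationaryField.
Context (G : zmodType) (n : nat) (R : realType) (dO : measure_display)
  (Omega : measurableType dO) (P : probability Omega R)
  (theta : n.-tuple G -> Omega -> Omega) (X0 : Omega -> R).
Hypothesis hth : mp_action P theta.
Hypothesis mX0 : measurable_fun setT X0.

Let theta0 : theta (tzero G n) = id. Proof. by case: hth. Qed.
Let thetaD s t : theta (tadd s t) = theta s \o theta t. Proof. by case: hth. Qed.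
Let theta_meas t : measurable_fun setT (theta t). Proof. by case: hth. Qed.
Let theta_P t A : measurable A -> P (theta t @^-1` A) = P A.
Proof. by case: hth => _ _ _; apply. Qed.

Lemma thetaK t : cancel (theta t) (theta (tneg t)).
Proof. by move=> x; rewrite -[LHS]/((theta (tneg t) \o theta t) x) -thetaD taddNt theta0. Qed.

Lemma thetaVK t : cancel (theta (tneg t)) (theta t).
Proof. by move=> x; rewrite -[LHS]/((theta t \o theta (tneg t)) x) -thetaD taddN theta0. Qed.

Lemma theta_image t B : theta t @` B = theta (tneg t) @^-1` B.
Proof.
apply/seteqP; split=> z.
- by move=> [x Bx <-]; rewrite /= thetaK.
- by move=> /= Bz; exists (theta (tneg t) z) => //; rewrite thetaVK.
Qed.

Lemma theta_inj t : injective (theta t).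
Proof. exact: can_inj (thetaK t). Qed.

Lemma theta_surj t : theta t @` setT = setT.
Proof. by rewrite theta_image preimage_setT. Qed.

Lemma measurable_theta_image t B : measurable B -> measurable (theta t @` B).
Proof. by move=> mB; rewrite theta_image -[X in measurable X]setTI; exact: theta_meas. Qed.

Lemma theta_image_P t B : measurable B -> P (theta t @` B) = P B.
Proof. by move=> mB; rewrite theta_image theta_P. Qed.

Lemma measurable_field t : measurable_fun setT (field theta X0 t).
Proof. exact: measurableT_comp. Qed.

Definition orthant (s : seq (n.-tuple G * R)) : set Omega :=
  [set w | forall p, p \in s -> p.2 < field theta X0 p.1 w].

Lemma orthant_cat s1 s2 : orthant (s1 ++ s2) = orthant s1 `&` orthant s2.
Proof.
apply/seteqP; split=> w /=.
- by move=> h; split=> p ps; apply: h; rewrite mem_cat ps ?orbT.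
- by move=> [h1 h2] p; rewrite mem_cat => /orP[/h1|/h2].
Qed.

Lemma orthant_cons p s :
  orthant (p :: s) = field theta X0 p.1 @^-1` `]p.2, +oo[ `&` orthant s.
Proof.
rewrite -cat1s orthant_cat; congr (_ `&` _); apply/seteqP; split=> w /=.
- by move=> /(_ p (mem_head _ _)); rewrite in_itv /= andbT.
- by move=> h q; rewrite inE => /eqP ->; move: h; rewrite in_itv /= andbT.
Qed.

Lemma orthant_nil : orthant [::] = setT.
Proof. by apply/seteqP; split=> w // _ p. Qed.

Lemma orthant_setI_closed : setI_closed (range orthant).
Proof. by move=> _ _ [s1 _ <-] [s2 _ <-]; exists (s1 ++ s2); rewrite ?orthant_cat. Qed.

Lemma sigmaX_orthant : sigmaX theta X0 = <<s range orthant >>.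
Proof.
apply/seteqP; split; apply: smallest_sub; try exact: smallest_sigma_algebra.
- move=> _ [t [C [mC ->]]].
  have : measurable_fun setT
      (field theta X0 t : g_sigma_algebraType (range orthant) -> R).
    have borelR : (measurable : set (set R)) = <<s @RGenOInfty.G R >>.
      exact: RGenOInfty.measurableE.
    apply: (@measurability _ _ (g_sigma_algebraType (range orthant)) R setT
      (field theta X0 t) _ borelR).
    move=> _ [_ [c ->] <-]; apply: measurableI => //.
    by apply: sub_sigma_algebra; exists [:: (t, c)]; rewrite // orthant_cons orthant_nil setIT.
  by move=> /(_ measurableT C mC); rewrite setTI.
- move=> _ [s _ <-]; elim: s => [|p s ih].
    by rewrite orthant_nil; exact: (@measurableT _ (g_sigma_algebraType _)).
  rewrite orthant_cons; apply: (@measurableI _ (g_sigma_algebraType _)) => //.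
  by apply: sub_sigma_algebra; exists p.1, `]p.2, +oo[%classic; split.
Qed.

Lemma sigmaX_measurable : sigmaX theta X0 `<=` measurable.
Proof.
apply: smallest_sub => [|_ [t [C [mC ->]]]]; first exact: sigma_algebra_measurable.
by rewrite -[X in measurable X]setTI; exact: measurable_field.
Qed.

Lemma measurable_orthant s : measurable (orthant s).
Proof. by apply: sigmaX_measurable; rewrite sigmaX_orthant; apply: sub_sigma_algebra; exists s. Qed.

Lemma orthant_image t s :
  theta t @` orthant s = orthant [seq (tadd p.1 (tneg t), p.2) | p <- s].
Proof.
rewrite theta_image; apply/seteqP; split=> w /=.
- by move=> h _ /mapP[p ps ->] /=; rewrite /field thetaD; exact: h.
- move=> h p ps; have := h (tadd p.1 (tneg t), p.2).
  by rewrite /field thetaD; apply; apply/mapP; exists p.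
Qed.

Section OrthantCorrelation.
Variables s1 s2 : seq (n.-tuple G * R).
Let L := s1 ++ s2.
Let m := size L.
Let p0 : n.-tuple G * R := (tzero G n, 0).
Let ts : m.-tuple (n.-tuple G) := [tuple (nth p0 L i).1 | i < m].
Let Y w := [tuple field theta X0 (tnth ts i) w | i < m].

Let above (K : pred nat) (x : m.-tuple R) : R :=
  if [forall i : 'I_m, K i ==> ((nth p0 L i).2 < tnth x i)] then 1 else 0.

Let above_nondecr K : coord_nondecr (above K).
Proof.
move=> x y xy; rewrite /above; case: ifPn => [/forallP hx|_]; last by case: ifP.
rewrite ifT //; apply/forallP => i; apply/implyP => Ki.
by apply: lt_le_trans (xy i); have /implyP := hx i; apply.
Qed.

Let above_orthant (K : pred nat) s (idx : nat -> nat) :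
  (forall i : 'I_m, K i -> (idx i < size s)%N /\ nth p0 L i = nth p0 s (idx i)) ->
  (forall p, p \in s -> exists2 i : 'I_m, K i & nth p0 L i = p) ->
  above K \o Y = \1_(orthant s).
Proof.
move=> Ks sK; apply/funext => w; rewrite /= indicE /above.
case: ifPn => [/forallP h|/forallP h].
  rewrite mem_set // => p /sK[i Ki <-].
  by have /implyP/(_ Ki) := h i; rewrite /Y !tnth_mktuple.
rewrite memNset // => hw; apply: h => i; apply/implyP => Ki.
rewrite /Y !tnth_mktuple; have [si ->] := Ks i Ki.
by apply: hw; exact: mem_nth.
Qed.

Let above_s1 : above (fun i => i < size s1)%N \o Y = \1_(orthant s1).
Proof.
apply: (above_orthant (idx := id)) => [i Ki|p ps]; first by rewrite /L nth_cat Ki.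
have ip : (index p s1 < m)%N by rewrite /m size_cat ltn_addr // index_mem.
by exists (Ordinal ip); rewrite /= ?index_mem // /L nth_cat index_mem ps nth_index.
Qed.

Let above_s2 : above (fun i => ~~ (i < size s1))%N \o Y = \1_(orthant s2).
Proof.
apply: (above_orthant (idx := subn^~ (size s1))) => [i /negbTE Ki|p ps].
  split; last by rewrite /L nth_cat Ki.
  have lti : (i < size s1 + size s2)%N by rewrite -size_cat ltn_ord.
  by rewrite ltn_subLR // leqNgt Ki.
have ip : (size s1 + index p s2 < m)%N by rewrite /m size_cat ltn_add2l index_mem.
exists (Ordinal ip); first by rewrite /= -leqNgt leq_addr.
by rewrite /L nth_cat ltnNge leq_addr /= addKn nth_index.
Qed.

Lemma orthant_pos_corr : associated P theta X0 ->
  (P (orthant s1) * P (orthant s2) <= P (orthant s1 `&` orthant s2))%E.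
Proof.
move=> hass.
have L1 A : measurable A -> \1_A \in Lfun P 1.
  by move=> mA; apply/Lfun1_integrable; exact: integrable_indic.
have m1 := measurable_orthant s1; have m2 := measurable_orthant s2.
have m12 := measurableI _ _ m1 m2.
have indI : \1_(orthant s1) * \1_(orthant s2) = \1_(orthant s1 `&` orthant s2) :> (Omega -> R).
  by apply/funext => w; rewrite indicI.
have := hass m ts _ _ (above_nondecr (fun i => i < size s1)%N)
  (above_nondecr (fun i => ~~ (i < size s1))%N).
rewrite /= -/Y above_s1 above_s2 indI => /(_ (L1 _ m1) (L1 _ m2) (L1 _ m12)).
rewrite covarianceE ?L1 ?indI ?L1 // !expectation_indic //.
by rewrite sube_ge0 // fin_numM // fin_num_measure.
Qed.

End OrthantCorrelation.

Lemma orthant_image_pos_corr t A B : associated P theta X0 ->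
  range orthant A -> range orthant B -> (P A * P B <= P (A `&` theta t @` B))%E.
Proof.
move=> hass [s1 _ <-] [s2 _ <-].
by rewrite -(theta_image_P t (measurable_orthant s2)) orthant_image; exact: orthant_pos_corr.
Qed.

Theorem associated_ergodic_iff_weak_mixing {J : Type} (F : set_system J) {PF : ProperFilter F}
    (Av : J -> (n.-tuple G -> \bar R) -> \bar R) (M : (n.-tuple G -> \bar R) -> Prop) :
  associated P theta X0 -> mean_operator F Av M ->
  (forall A B, sigmaX theta X0 A -> sigmaX theta X0 B ->
     M (fun t => P (A `&` theta t @` B))) ->
  (forall A B, sigmaX theta X0 A -> sigmaX theta X0 B ->
     M (fun t => `|P (A `&` theta t @` B) - P A * P B|%E)) ->
  (forall A B, sigmaX theta X0 A -> sigmaX theta X0 B ->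
     Av j (fun t => P (A `&` theta t @` B)) @[j --> F] --> (P A * P B)%E) <->
  (forall A B, sigmaX theta X0 A -> sigmaX theta X0 B ->
     Av j (fun t => `|P (A `&` theta t @` B) - P A * P B|%E) @[j --> F] --> 0%E).
Proof.
rewrite sigmaX_orthant => hass hAv M_corr M_dev.
apply: ergodic_iff_weak_mixing_pos_corr M_corr M_dev => //.
- exact: orthant_setI_closed.
- by move=> _ [s _ <-]; exact: measurable_orthant.
- exact: theta_inj.
- exact: theta_surj.
- exact: measurable_theta_image.
- exact: theta_image_P.
- by move=> t A B; exact: orthant_image_pos_corr.
Qed.

End StationaryField.

Section BoxSum.
Context {R : realType} (T n : nat).

Lemma box_sum_add (f g : n.-tuple int -> \bar R) :
  box_sum T (fun t => f t + g t)%E = (box_sum T f + box_sum T g)%E.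
Proof.
elim: n f g => [//|k ih] f g /=.
by rewrite -big_split /=; apply: eq_bigr => i _; exact: ih.
Qed.

Lemma box_sum_le (f g : n.-tuple int -> \bar R) :
  (forall t, f t <= g t)%E -> (box_sum T f <= box_sum T g)%E.
Proof.
elim: n f g => [|k ih] f g fg /=; first exact: fg.
by apply: lee_sum => i _; apply: ih => t; exact: fg.
Qed.

Lemma box_sum_ge0 (f : n.-tuple int -> \bar R) :
  (forall t, 0 <= f t)%E -> (0 <= box_sum T f)%E.
Proof.
elim: n f => [|k ih] f f0 /=; first exact: f0.
by apply: sume_ge0 => i _; apply: ih => t; exact: f0.
Qed.

Lemma box_sum_cst (r : R) :
  box_sum T (fun _ : n.-tuple int => r%:E) = (((2 * T) ^ n)%:R * r)%:E.
Proof.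
elim: n => [|k ih] /=; first by rewrite mul1r.
under eq_bigr do rewrite ih.
by rewrite sumEFin sumr_const card_ord expnS natrM -mulr_natl; congr (_%:E); ring.
Qed.

End BoxSum.

Definition box_mean_sum {R : realType} (n T : nat) (f : n.-tuple int -> \bar R) : \bar R :=
  (((((2 * T) ^ n)%:R : R)^-1)%:E * box_sum T f)%E.

Lemma box_mean_sum_mean_operator {R : realType} (n : nat) :
  mean_operator \oo (@box_mean_sum R n) (fun=> True).
Proof.
have c0 (T : nat) : (0 <= ((((2 * T) ^ n)%:R : R)^-1)%:E)%E by rewrite lee_fin invr_ge0.
split=> //.
- move=> r r0; near=> T.
  have T0 : (0 < T)%N by near: T; exists 1%N.
  rewrite /box_mean_sum box_sum_cst -EFinM mulrA mulVf ?mul1r //.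
  by rewrite pnatr_eq0 expn_eq0 negb_and muln_eq0 -!lt0n T0.
- by move=> T f g _ _ f0 g0; rewrite /box_mean_sum box_sum_add ge0_muleDr //; exact: box_sum_ge0.
- by apply: nearW => T f g _ _ f0 fg; apply: lee_wpmul2l => //; exact: box_sum_le.
Unshelve. all: end_near.
Qed.

Section BoxIntegral.
Context {R : realType} (T : R).
Let D : set R := `](- T), T]%classic.
Let mD : measurable D. Proof. exact: measurable_itv. Qed.

Lemma box_int_ge0 n (f : n.-tuple R -> \bar R) :
  (forall t, 0 <= f t)%E -> (0 <= box_int T f)%E.
Proof.
elim: n f => [|n ih] f f0 /=; first exact: f0.
by apply: integral_ge0 => x _; apply: ih => t; exact: f0.
Qed.

Lemma measurable_box_int n {dY} (Y : measurableType dY) (f : Y * n.-tuple R -> \bar R) :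
  measurable_fun setT f -> (forall z, 0 <= f z)%E ->
  measurable_fun setT (fun y => box_int T (fun s => f (y, s))).
Proof.
elim: n dY Y f => [|n ih] dY Y f mf f0 /=.
  by apply: measurableT_comp => //; exact: measurable_fun_pair.
pose g (z : (Y * R) * n.-tuple R) := f (z.1.1, [tuple of z.1.2 :: z.2]).
have mg : measurable_fun setT g.
  apply: measurableT_comp => //; apply: measurable_fun_pair.
    by apply: measurableT_comp => //; exact: measurable_fst.
  apply: measurable_cons; last exact: measurable_snd.
  by apply: measurableT_comp => //; exact: measurable_snd.
set h := fun y => box_int T (fun s => g (y, s)).
have mh : measurable_fun setT h by apply: ih => // z; exact: f0.
pose k (z : Y * R) := (h z * (\1_D z.2)%:E)%E.
have mk : measurable_fun setT k.
  apply: emeasurable_funM => //; apply/measurable_EFinP.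
  by apply: measurableT_comp; [exact: measurable_indic|exact: measurable_snd].
have k0 z : (0 <= k z)%E.
  by apply: mule_ge0; [apply: box_int_ge0 => s; exact: f0|rewrite lee_fin].
have := @measurable_fun_fubini_tonelli_F _ _ _ _ _ (@lebesgue_measure R) k mk k0.
apply: eq_measurable_fun => y _.
rewrite /fubini_F [RHS]integral_mkcond; apply: eq_integral => x _.
by rewrite /k /patch indicE; case: ifPn => _; rewrite ?mule1 ?mule0.
Qed.

Let measurable_box_int_cons n (f : n.+1.-tuple R -> \bar R) :
  measurable_fun setT f -> (forall t, 0 <= f t)%E ->
  measurable_fun D (fun x => box_int T (fun s => f [tuple of x :: s])).
Proof.
move=> mf f0; apply: measurable_funTS.
apply: (measurable_box_int (f := fun z => f [tuple of z.1 :: z.2])) => //.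
by apply: measurableT_comp => //; apply: measurable_cons; [exact: measurable_fst|exact: measurable_snd].
Qed.

Let measurable_cons_fun n (f : n.+1.-tuple R -> \bar R) x : measurable_fun setT f ->
  measurable_fun setT (fun s : n.-tuple R => f [tuple of x :: s]).
Proof. by move=> mf; apply: measurableT_comp => //; apply: measurable_cons. Qed.

Lemma box_int_add n (f g : n.-tuple R -> \bar R) :
  measurable_fun setT f -> measurable_fun setT g ->
  (forall t, 0 <= f t)%E -> (forall t, 0 <= g t)%E ->
  box_int T (fun t => f t + g t)%E = (box_int T f + box_int T g)%E.
Proof.
elim: n f g => [//|n ih] f g mf mg f0 g0 /=.
rewrite -ge0_integralD //; last 4 first.
- by move=> x _; exact: box_int_ge0.
- exact: measurable_box_int_cons.
- by move=> x _; exact: box_int_ge0.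
- exact: measurable_box_int_cons.
by apply: eq_integral => x _; apply: ih => //; exact: measurable_cons_fun.
Qed.

Lemma box_int_le n (f g : n.-tuple R -> \bar R) :
  measurable_fun setT f -> measurable_fun setT g ->
  (forall t, 0 <= f t)%E -> (forall t, f t <= g t)%E ->
  (box_int T f <= box_int T g)%E.
Proof.
elim: n f g => [|n ih] f g mf mg f0 fg /=; first exact: fg.
have g0 t : (0 <= g t)%E by apply: le_trans (fg t).
apply: ge0_le_integral => //; [by move=> x _; exact: box_int_ge0
  |exact: measurable_box_int_cons|exact: measurable_box_int_cons|].
by move=> x _; apply: ih => //; exact: measurable_cons_fun.
Qed.

Lemma box_int_cst n (r : R) : 0 < T ->
  box_int T (fun _ : n.-tuple R => r%:E) = (((2 * T) ^+ n) * r)%:E.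
Proof.
move=> T0; elim: n => [|n ih] /=; first by rewrite expr0 mul1r.
have lD : @lebesgue_measure R `](- T)%R, T]%classic = (T - - T)%:E.
  by rewrite lebesgue_measure_itv /= lte_fin ifT -?EFinD //; lra.
rewrite ih integral_cst //.
transitivity (((2 * T) ^+ n * r)%:E * (T - - T)%:E)%E; first by congr (_ * _)%E; exact: lD.
by rewrite -EFinM exprS; congr (_%:E); ring.
Qed.

End BoxIntegral.

Definition box_mean_int {R : realType} (n : nat) (T : R) (f : n.-tuple R -> \bar R) : \bar R :=
  ((((2 * T) ^+ n)^-1)%:E * box_int T f)%E.

Lemma box_mean_int_mean_operator {R : realType} (n : nat) :
  mean_operator (pinfty_nbhs R) (@box_mean_int R n) (fun f => measurable_fun setT f).
Proof.
split.
- by move=> r _; exact: measurable_cst.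
- by move=> f g mf mg; exact: emeasurable_funD.
- move=> r r0; near=> T.
  have T0 : 0 < T by near: T; apply: nbhs_pinfty_gt; rewrite num_real.
  rewrite /box_mean_int box_int_cst // -EFinM mulrA mulVf ?mul1r //.
  by rewrite expf_neq0 // mulf_neq0 // gt_eqF.
- by move=> T f g mf mg f0 g0; rewrite /box_mean_int box_int_add // ge0_muleDr //;
    exact: box_int_ge0.
- near=> T => f g mf mg f0 fg.
  have T0 : 0 < T by near: T; apply: nbhs_pinfty_gt; rewrite num_real.
  apply: lee_wpmul2l; last exact: box_int_le.
  by rewrite lee_fin invr_ge0 exprn_ge0 // mulr_ge0 // ltW.
Unshelve. all: end_near.
Qed.

Section ContinuousField.
Context (R : realType) (d : nat) (dO : measure_display) (Omega : measurableType dO)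
  (P : probability Omega R) (theta : d.-tuple R -> Omega -> Omega) (X0 : Omega -> R).
Hypothesis hth : mp_action P theta.
Hypothesis mX0 : measurable_fun setT X0.
Hypothesis mX : measurable_fun setT (fun p : d.-tuple R * Omega => X0 (theta p.1 p.2)).

Let thetaD s t : theta (tadd s t) = theta s \o theta t. Proof. by case: hth. Qed.

Let measurable_tsub (s : d.-tuple R) :
  measurable_fun setT (fun t : d.-tuple R => tadd s (tneg t)).
Proof.
apply/measurable_fun_tnthP => i.
have -> : (tnth (T:=R))^~ i \o (fun t : d.-tuple R => tadd s (tneg t)) = (fun t => tnth s i - tnth t i).
  by apply/funext => t /=; rewrite !tnth_map !tnth_ord_tuple.
by apply: measurable_funB; [exact: measurable_cst|exact: measurable_tnth].
Qed.

Let measurable_shift_preimage B : sigmaX theta X0 B ->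
  measurable ((fun z : d.-tuple R * Omega => theta (tneg z.1) z.2) @^-1` B).
Proof.
move: B; apply: smallest_sub.
  split=> [|A mA|Fs mF]; first by rewrite preimage_set0.
    by rewrite setTD preimage_setC; exact: measurableC.
  by rewrite preimage_bigcup; exact: bigcupT_measurable.
move=> _ [s [C [mC ->]]].
have -> : (fun z : d.-tuple R * Omega => theta (tneg z.1) z.2) @^-1` (field theta X0 s @^-1` C)
    = (fun z => X0 (theta (tadd s (tneg z.1)) z.2)) @^-1` C.
  by apply/seteqP; split=> z; rewrite /= /field thetaD.
have mshift : measurable_fun setT (fun z : d.-tuple R * Omega => (tadd s (tneg z.1), z.2)).
  apply: measurable_fun_pair; last exact: measurable_snd.
  exact: measurableT_comp (measurable_tsub s) measurable_fst.
rewrite -[X in measurable X]setTI; exact: (measurableT_comp mX mshift) measurableT _ mC.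
Qed.

(* [A `&` theta t @` B] is the [t]-section of a jointly measurable subset of [R^d * Omega]. *)
Lemma measurable_corr A B : sigmaX theta X0 A -> sigmaX theta X0 B ->
  measurable_fun setT (fun t : d.-tuple R => P (A `&` theta t @` B)).
Proof.
move=> SA SB.
pose E := (setT `*` A) `&` ((fun z => theta (tneg z.1) z.2) @^-1` B).
have mE : measurable E.
  apply: measurableI; last exact: measurable_shift_preimage.
  by apply: measurableX => //; exact: sigmaX_measurable hth mX0 _ SA.
apply: eq_measurable_fun (measurable_fun_xsection P mE) => t _ /=; congr (P _).
rewrite (theta_image hth); apply/seteqP; split=> w; rewrite /xsection /= inE /E /=.
- by move=> [[_ Aw] Bw].
- by move=> [Aw Bw].
Qed.

End ContinuousField.

Theorem associated_ergodic_iff_weak_mixingZ (R : realType) (d : nat)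
    (dO : measure_display) (Omega : measurableType dO) (P : probability Omega R)
    (theta : d.-tuple int -> Omega -> Omega) (X0 : Omega -> R) :
  mp_action P theta -> measurable_fun setT X0 -> associated P theta X0 ->
  ergodicZ P theta X0 <-> weakly_mixingZ P theta X0.
Proof.
move=> hth mX0 hass; rewrite /ergodicZ /weakly_mixingZ.
exact: (associated_ergodic_iff_weak_mixing hth mX0 hass (box_mean_sum_mean_operator d)).
Qed.

Theorem associated_ergodic_iff_weak_mixingR (R : realType) (d : nat)
    (dO : measure_display) (Omega : measurableType dO) (P : probability Omega R)
    (theta : d.-tuple R -> Omega -> Omega) (X0 : Omega -> R) :
  mp_action P theta -> measurable_fun setT X0 ->
  measurable_fun setT (fun p : d.-tuple R * Omega => X0 (theta p.1 p.2)) ->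
  associated P theta X0 ->
  ergodicR P theta X0 <-> weakly_mixingR P theta X0.
Proof.
move=> hth mX0 mX hass; rewrite /ergodicR /weakly_mixingR.
apply: (associated_ergodic_iff_weak_mixing hth mX0 hass (box_mean_int_mean_operator d)).
- by move=> A B SA SB; exact (measurable_corr hth mX0 mX SA SB).
- move=> A B SA SB; apply: measurableT_comp; first exact: abse_measurable.
  apply: emeasurable_funB; last exact: measurable_cst.
  exact (measurable_corr hth mX0 mX SA SB).
Qed.

Theorem mainTheorem17 (R : realType) (d : nat) (hd : (0 < d)%N)
  (dO : measure_display) (Omega : measurableType dO) (P : probability Omega R) :
  (forall (theta : d.-tuple int -> Omega -> Omega) (X0 : Omega -> R),
     mp_action P theta ->
     measurable_fun setT X0 ->
     associated P theta X0 ->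
     (ergodicZ P theta X0 <-> weakly_mixingZ P theta X0))
  /\
  (forall (theta : d.-tuple R -> Omega -> Omega) (X0 : Omega -> R),
     mp_action P theta ->
     measurable_fun setT X0 ->
     measurable_fun setT (fun p : d.-tuple R * Omega => X0 (theta p.1 p.2)) ->
     associated P theta X0 ->
     (ergodicR P theta X0 <-> weakly_mixingR P theta X0)).
Proof.
split=> theta X0; [exact: associated_ergodic_iff_weak_mixingZ|exact: associated_ergodic_iff_weak_mixingR].
Qed.
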